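(* Let $n\geq 1$ be an integer, $p>1$ real, $q=pe^{2\pi i/n}$, and let $A\subset\mathbb R$ be a finite nonempty alphabet. Let $\Lambda_{n,p,A}=\{\sum_{j=1}^\infty x_jq^{-j}\mid x_j\in A\}$. For $h=1,\dots,n$ define $$\underline K(h)=\{k\in\{0,\dots,n-1\}\mid (k-h+1)\bmod n\leq \lfloor n/2\rfloor-1\},\qquad \overline K(h)=\{k\in\{0,\dots,n-1\}\mid (k-h+1)\bmod n\leq \lceil n/2\rceil-1\},$$ where $(k-h+1)\bmod n$ denotes the representative in $\{0,\dots,n-1\}$, and set $$\mathbf v_{2h-1}=\sum_{k\in\underline K(h)}q^k,\qquad \mathbf v_{2h}=\sum_{k\in\overline K(h)}q^k .$$ Then $$\mathrm{conv}(\Lambda_{n,p,A})=\frac{\max A-\min A}{p^n-1}\,\mathrm{conv}\{\mathbf v_h\mid h=1,\dots,2n\}+\frac{1}{p^n-1}\sum_{k=0}^{n-1}(\min A)\,q^k .$$ Moreover, if $n$ is even, then $$\mathrm{conv}(\Lambda_{n,p,A})=\frac{\max A-\min A}{p^n-1}\,\mathrm{conv}\{\mathbf v_{2h}\mid h=1,\dots,n\}+\frac{1}{p^n-1}\sum_{k=0}^{n-1}(\min A)\,q^k .$$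
   Context: For a set $Y\subset\mathbb C$, $c\in\mathbb R$ and $d\in\mathbb C$, $cY+d=\{cy+d\mid y\in Y\}$. $\mathrm{conv}$ denotes convex hull in $\mathbb C\cong\mathbb R^2$. *)

From Stdlib Require Import Reals ZArith List.
From Coquelicot Require Import Coquelicot.
Open Scope R_scope.

Definition Cexpi (theta : R) : C := (cos theta, sin theta).

Definition qbase (n : nat) (p : R) : C :=
  Cmult (RtoC p) (Cexpi (2 * PI / INR n)).

Definition lmax (A : list R) : R := fold_right Rmax (hd 0 A) A.
Definition lmin (A : list R) : R := fold_right Rmin (hd 0 A) A.

Definition Lambda (n : nat) (p : R) (A : list R) : C -> Prop :=
  fun z => exists x : nat -> R, (forall j, In (x j) A) /\
    is_series (V := C_R_NormedModule)
      (fun j => Cmult (RtoC (x (S j))) (Cinv (Cpow (qbase n p) (S j)))) z.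

Definition conv (S : C -> Prop) : C -> Prop :=
  fun z => exists l : list (R * C),
    (forall c, In c l -> 0 <= fst c /\ S (snd c)) /\
    fold_right Rplus 0 (map fst l) = 1 /\
    z = fold_right Cplus (RtoC 0) (map (fun c => Cmult (RtoC (fst c)) (snd c)) l).

Definition affimg (c : R) (Y : C -> Prop) (d : C) : C -> Prop :=
  fun z => exists y, Y y /\ z = Cplus (Cmult (RtoC c) y) d.

Fixpoint Csum (n : nat) (f : nat -> C) : C :=
  match n with O => RtoC 0 | S m => Cplus (Csum m f) (f m) end.

Definition inKlow (n h k : nat) : bool :=
  Z.leb (Z.modulo (Z.of_nat k - Z.of_nat h + 1) (Z.of_nat n))
        (Z.div (Z.of_nat n) 2 - 1).
Definition inKup (n h k : nat) : bool :=
  Z.leb (Z.modulo (Z.of_nat k - Z.of_nat h + 1) (Z.of_nat n))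
        (Z.div (Z.of_nat n + 1) 2 - 1).

Definition vodd (n : nat) (q : C) (h : nat) : C :=
  Csum n (fun k => if inKlow n h k then Cpow q k else RtoC 0).
Definition veven (n : nat) (q : C) (h : nat) : C :=
  Csum n (fun k => if inKup n h k then Cpow q k else RtoC 0).

Definition Vall (n : nat) (q : C) : C -> Prop :=
  fun z => exists h, (1 <= h <= n)%nat /\ (z = vodd n q h \/ z = veven n q h).
Definition Veven (n : nat) (q : C) : C -> Prop :=
  fun z => exists h, (1 <= h <= n)%nat /\ z = veven n q h.

(* Since [q^n = p^n] is real, [q^-s = p^-(s+k) q^k] whenever [s + k = 0 (mod n)].
   Regrouping the digits by residue classes writes every point of [Lambda] as
   [sum_k sigma_k q^k] with [min A / (p^n - 1) <= sigma_k <= max A / (p^n - 1)], and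
   digits depending only on the residue of their index realise every 0/1 choice of
   the [sigma_k].  So [conv Lambda] is the affine image of the zonotope
   [{sum_k t_k q^k | t in [0,1]^n}], and it remains to see that the zonotope is the
   convex hull of the [v_h].  Its vertices are the sums of [q^k] over cyclic arcs of
   [floor (n/2)] and [floor (n/2) + 1] consecutive exponents; they form a polygon
   turning counterclockwise around the centre [sum_k q^k / 2], and every point of the
   zonotope lies to the left of each of its edges, hence in one of the fan triangles.
   For even [n] the arcs of length [n/2 + 1] lie on the edge between two arcs of
   length [n/2], because [q^(n/2)] is a negative real. *)

From Stdlib Require Import Reals ZArith List Lia Lra.
From Coquelicot Require Import Coquelicot.
Open Scope R_scope.

Lemma C_ext (a b : C) : fst a = fst b -> snd a = snd b -> a = b.
Proof. destruct a, b; simpl; intros; subst; reflexivity. Qed.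

Ltac C_ring := apply C_ext; simpl; ring.

Fixpoint Rsum (n : nat) (f : nat -> R) : R :=
  match n with O => 0 | S m => Rsum m f + f m end.

Lemma Csum_fst n f : fst (Csum n f) = Rsum n (fun k => fst (f k)).
Proof. induction n as [|n IH]; simpl; [|rewrite IH]; reflexivity. Qed.

Lemma Csum_snd n f : snd (Csum n f) = Rsum n (fun k => snd (f k)).
Proof. induction n as [|n IH]; simpl; [|rewrite IH]; reflexivity. Qed.

Lemma Rsum_ext n f g : (forall k, (k < n)%nat -> f k = g k) -> Rsum n f = Rsum n g.
Proof.
  induction n as [|n IH]; intros H; simpl; [reflexivity|].
  rewrite IH, H by first [lia | intros; apply H; lia]. reflexivity.
Qed.

Lemma Rsum_plus n f g : Rsum n (fun k => f k + g k) = Rsum n f + Rsum n g.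
Proof. induction n as [|n IH]; simpl; [|rewrite IH]; ring. Qed.

Lemma Rsum_scal n c f : Rsum n (fun k => c * f k) = c * Rsum n f.
Proof. induction n as [|n IH]; simpl; [|rewrite IH]; ring. Qed.

Lemma Rsum_opp n f : Rsum n (fun k => - f k) = - Rsum n f.
Proof. induction n as [|n IH]; simpl; [|rewrite IH]; ring. Qed.

Lemma Rsum_nonneg n f : (forall k, (k < n)%nat -> 0 <= f k) -> 0 <= Rsum n f.
Proof.
  induction n as [|n IH]; intros H; simpl; [lra|].
  assert (0 <= Rsum n f) by (apply IH; intros; apply H; lia).
  assert (0 <= f n) by (apply H; lia). lra.
Qed.

Lemma Rsum_pos n f j : (forall k, (k < n)%nat -> 0 <= f k) -> (j < n)%nat -> 0 < f j ->
  0 < Rsum n f.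
Proof.
  induction n as [|n IH]; intros H Hj Hf; simpl; [lia|].
  assert (0 <= f n) by (apply H; lia).
  destruct (Nat.eq_dec j n) as [->|Hne].
  - assert (0 <= Rsum n f) by (apply Rsum_nonneg; intros; apply H; lia). lra.
  - assert (0 < Rsum n f) by (apply IH; [intros; apply H; lia | lia | auto]). lra.
Qed.

Lemma Rsum_single n f j : (j < n)%nat -> (forall k, (k < n)%nat -> k <> j -> f k = 0) ->
  Rsum n f = f j.
Proof.
  induction n as [|n IH]; intros Hj H; simpl; [lia|].
  destruct (Nat.eq_dec j n) as [->|Hne].
  - rewrite (Rsum_ext n f (fun k => 0 * f k)) by (intros; rewrite H by lia; ring).
    rewrite Rsum_scal. ring.
  - rewrite IH, (H n) by first [lia | intros; apply H; lia]. ring.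
Qed.

Lemma Csum_ext n f g : (forall k, (k < n)%nat -> f k = g k) -> Csum n f = Csum n g.
Proof.
  intros H; apply C_ext; rewrite ?Csum_fst, ?Csum_snd; apply Rsum_ext;
    intros; rewrite H; auto.
Qed.

Lemma Csum_single n f j : (j < n)%nat -> (forall k, (k < n)%nat -> k <> j -> f k = RtoC 0) ->
  Csum n f = f j.
Proof.
  intros Hj H; apply C_ext; rewrite ?Csum_fst, ?Csum_snd;
    apply (Rsum_single _ (fun k => _ (f k))); auto; intros; rewrite H; auto.
Qed.

Definition cross (a b : C) : R := fst a * snd b - snd a * fst b.

Definition orient (o a b : C) : R := cross (Cminus a o) (Cminus b o).

Lemma cross_opp_l x y : cross (Copp x) y = - cross x y.
Proof. unfold cross; simpl; ring. Qed.

Lemma cross_opp_r x y : cross x (Copp y) = - cross x y.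
Proof. unfold cross; simpl; ring. Qed.

Lemma cross_anti x y : cross x y = - cross y x.
Proof. unfold cross; ring. Qed.

Lemma orient_step_from o a e : orient o a (Cplus a e) = cross (Cminus a o) e.
Proof. unfold orient, cross; simpl; ring. Qed.

Lemma orient_step_to a e z : orient a (Cplus a e) z = cross e (Cminus z a).
Proof. unfold orient, cross; simpl; ring. Qed.

Section LinComb.
Variables (n : nat) (w : nat -> C).

Definition lin (a : nat -> R) : C := Csum n (fun j => Cmult (RtoC (a j)) (w j)).

Lemma lin_fst a : fst (lin a) = Rsum n (fun j => a j * fst (w j)).
Proof. unfold lin; rewrite Csum_fst; apply Rsum_ext; intros; simpl; ring. Qed.

Lemma lin_snd a : snd (lin a) = Rsum n (fun j => a j * snd (w j)).
Proof. unfold lin; rewrite Csum_snd; apply Rsum_ext; intros; simpl; ring. Qed.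

Lemma lin_ext a b : (forall j, (j < n)%nat -> a j = b j) -> lin a = lin b.
Proof. intros H; apply Csum_ext; intros; rewrite H; auto. Qed.

Lemma lin_plus a b : lin (fun j => a j + b j) = Cplus (lin a) (lin b).
Proof.
  apply C_ext; simpl; rewrite ?lin_fst, ?lin_snd, <- Rsum_plus;
    apply Rsum_ext; intros; ring.
Qed.

Lemma lin_opp a : lin (fun j => - a j) = Copp (lin a).
Proof.
  apply C_ext; simpl; rewrite ?lin_fst, ?lin_snd, <- Rsum_opp;
    apply Rsum_ext; intros; ring.
Qed.

Lemma lin_scal c a : lin (fun j => c * a j) = Cmult (RtoC c) (lin a).
Proof.
  apply C_ext; simpl; rewrite ?lin_fst, ?lin_snd, <- Rsum_scal;
    rewrite Rmult_0_l, ?Rminus_0_r, ?Rplus_0_r; apply Rsum_ext; intros; ring.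
Qed.

Lemma lin_minus a b : Cminus (lin a) (lin b) = lin (fun j => a j - b j).
Proof. unfold Cminus, Rminus. rewrite lin_plus, lin_opp. reflexivity. Qed.

Lemma lin_indicator k : (k < n)%nat -> lin (fun j => if Nat.eqb j k then 1 else 0) = w k.
Proof.
  intros Hk. unfold lin. rewrite (Csum_single _ _ k Hk).
  - rewrite Nat.eqb_refl. C_ring.
  - intros j _ Hj. apply Nat.eqb_neq in Hj. rewrite Hj. C_ring.
Qed.

Lemma cross_lin_l a y : cross (lin a) y = Rsum n (fun j => a j * cross (w j) y).
Proof.
  unfold cross. rewrite lin_fst, lin_snd.
  rewrite (Rsum_ext _ (fun j => a j * (fst (w j) * snd y - snd (w j) * fst y))
    (fun j => snd y * (a j * fst (w j)) + - (fst y * (a j * snd (w j)))))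
    by (intros; ring).
  rewrite Rsum_plus, Rsum_opp, !Rsum_scal. ring.
Qed.

Lemma cross_lin_r a y : cross y (lin a) = Rsum n (fun j => a j * cross y (w j)).
Proof.
  unfold cross. rewrite lin_fst, lin_snd.
  rewrite (Rsum_ext _ (fun j => a j * (fst y * snd (w j) - snd y * fst (w j)))
    (fun j => fst y * (a j * snd (w j)) + - (snd y * (a j * fst (w j)))))
    by (intros; ring).
  rewrite Rsum_plus, Rsum_opp, !Rsum_scal. ring.
Qed.

End LinComb.

Definition wsum (l : list (R * C)) : R := fold_right Rplus 0 (map fst l).

Definition comb (l : list (R * C)) : C :=
  fold_right Cplus (RtoC 0) (map (fun c => Cmult (RtoC (fst c)) (snd c)) l).

Definition weights_in (S : C -> Prop) (l : list (R * C)) : Prop :=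
  forall c, In c l -> 0 <= fst c /\ S (snd c).

Lemma conv_intro S l : weights_in S l -> wsum l = 1 -> conv S (comb l).
Proof. intros H1 H2. exists l. auto. Qed.

Lemma weights_in_cons S a x l :
  0 <= a -> S x -> weights_in S l -> weights_in S ((a, x) :: l).
Proof. intros Ha Hx Hl c [<-|Hc]; auto. Qed.

Lemma weights_in_nil S : weights_in S nil.
Proof. intros c []. Qed.

Lemma wsum_app l1 l2 : wsum (l1 ++ l2) = wsum l1 + wsum l2.
Proof. unfold wsum; induction l1 as [|c l1 IH]; simpl; [|rewrite IH]; ring. Qed.

Lemma comb_app l1 l2 : comb (l1 ++ l2) = Cplus (comb l1) (comb l2).
Proof. unfold comb; induction l1 as [|c l1 IH]; simpl; [|rewrite IH]; C_ring. Qed.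

Definition wscale (a : R) (l : list (R * C)) : list (R * C) :=
  map (fun c => (a * fst c, snd c)) l.

Lemma wsum_wscale a l : wsum (wscale a l) = a * wsum l.
Proof. unfold wsum, wscale; induction l as [|c l IH]; simpl; [|rewrite IH]; ring. Qed.

Lemma comb_wscale a l : comb (wscale a l) = Cmult (RtoC a) (comb l).
Proof. unfold comb, wscale; induction l as [|c l IH]; simpl; [|rewrite IH]; C_ring. Qed.

Lemma conv_incl (S : C -> Prop) x : S x -> conv S x.
Proof.
  intros H. replace x with (comb ((1, x) :: nil)) by (unfold comb; C_ring).
  apply conv_intro; [apply weights_in_cons, weights_in_nil; auto; lra | unfold wsum; simpl; ring].
Qed.

Lemma conv_mono (S T : C -> Prop) z : (forall x, S x -> T x) -> conv S z -> conv T z.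
Proof. intros H [l [Hl Hz]]. exists l. split; auto. intros c Hc. destruct (Hl c Hc); auto. Qed.

Lemma conv_flatten (T : C -> Prop) l : weights_in (conv T) l ->
  exists l', weights_in T l' /\ wsum l' = wsum l /\ comb l' = comb l.
Proof.
  induction l as [|[a x] l IH]; intros H.
  - exists nil. split; [apply weights_in_nil | auto].
  - destruct IH as [l' [H1 [H2 H3]]]; [intros c Hc; apply H; simpl; auto|].
    destruct (H (a, x)) as [Ha [m [Hm [Hw Hx]]]]; [simpl; auto|]. simpl in Ha, Hx.
    exists (wscale a m ++ l'). split; [|split].
    + intros c Hc. apply in_app_or in Hc as [Hc|Hc]; auto.
      apply in_map_iff in Hc as [c' [<- Hc']]. destruct (Hm c' Hc'). simpl.
      split; auto. apply Rmult_le_pos; auto.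
    + rewrite wsum_app, wsum_wscale, H2. change (wsum m = 1) in Hw. rewrite Hw.
      unfold wsum; simpl; ring.
    + rewrite comb_app, comb_wscale, H3. change (x = comb m) in Hx. rewrite <- Hx. reflexivity.
Qed.

Lemma conv_conv_sub (S T : C -> Prop) z : (forall x, S x -> conv T x) -> conv S z -> conv T z.
Proof.
  intros HST Hz. apply (conv_mono _ (conv T)) in Hz; auto.
  destruct Hz as [l [Hl [Hw ->]]]. change (wsum l = 1) in Hw. change (conv T (comb l)).
  destruct (conv_flatten T l Hl) as [l' [H1 [H2 H3]]].
  rewrite <- H3. apply conv_intro; auto. rewrite H2. exact Hw.
Qed.

Lemma conv_segment (S : C -> Prop) x y a : 0 <= a <= 1 -> S x -> S y ->
  conv S (Cplus (Cmult (RtoC a) x) (Cmult (RtoC (1 - a)) y)).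
Proof.
  intros Ha Hx Hy.
  replace (Cplus _ _) with (comb ((a, x) :: (1 - a, y) :: nil)) by (unfold comb; C_ring).
  apply conv_intro.
  - repeat apply weights_in_cons; auto using weights_in_nil; lra.
  - unfold wsum; simpl; ring.
Qed.

Lemma comb_affine_map c d l :
  comb (map (fun e => (fst e, Cplus (Cmult (RtoC c) (snd e)) d)) l)
  = Cplus (Cmult (RtoC c) (comb l)) (Cmult (RtoC (wsum l)) d).
Proof. unfold comb, wsum; induction l as [|e l IH]; simpl; [|rewrite IH]; C_ring. Qed.

Lemma conv_affimg (S T : C -> Prop) c d :
  (forall y, S y -> affimg c (conv T) d y) ->
  (forall v, T v -> S (Cplus (Cmult (RtoC c) v) d)) ->
  forall z, conv S z <-> affimg c (conv T) d z.
Proof.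
  intros HS HT z. split.
  - intros [l [Hl [Hw ->]]]. change (wsum l = 1) in Hw. change (affimg c (conv T) d (comb l)).
    assert (Hl' : exists l', weights_in (conv T) l' /\ wsum l' = wsum l /\
      comb l = Cplus (Cmult (RtoC c) (comb l')) (Cmult (RtoC (wsum l)) d)).
    { clear Hw. induction l as [|[a y] l IH].
      - exists nil. split; [apply weights_in_nil | split; [reflexivity | unfold comb, wsum; C_ring]].
      - destruct IH as [l' [H1 [H2 H3]]]; [intros e He; apply Hl; simpl; auto|].
        destruct (Hl (a, y)) as [Ha Hy]; [simpl; auto|]. simpl in Ha, Hy.
        destruct (HS y Hy) as [v [Hv ->]].
        exists ((a, v) :: l'). split; [|split].
        + apply weights_in_cons; auto.
        + unfold wsum in *; simpl; rewrite H2; ring.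
        + unfold comb, wsum in *; simpl. rewrite H3. C_ring. }
    destruct Hl' as [l' [H1 [H2 H3]]]. exists (comb l'). split.
    + apply (conv_conv_sub (conv T)); auto. apply conv_intro; auto. congruence.
    + rewrite H3, Hw. C_ring.
  - intros [y [[l [Hl [Hw ->]]] ->]]. change (wsum l = 1) in Hw.
    exists (map (fun e => (fst e, Cplus (Cmult (RtoC c) (snd e)) d)) l). split; [|split].
    + intros e He. apply in_map_iff in He as [e' [<- He']]. destruct (Hl e' He'). simpl; auto.
    + change (wsum (map (fun e => (fst e, Cplus (Cmult (RtoC c) (snd e)) d)) l) = 1).
      rewrite <- Hw. unfold wsum. rewrite map_map. reflexivity.
    + change (Cplus (Cmult (RtoC c) (comb l)) d =
        comb (map (fun e => (fst e, Cplus (Cmult (RtoC c) (snd e)) d)) l)).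
      rewrite comb_affine_map, Hw. C_ring.
Qed.

(** * Points in a star-shaped polygon *)

Lemma sign_change (s : nat -> R) j M : (0 < M)%nat -> 0 <= s j -> s (j + M)%nat <= 0 ->
  exists i, (j <= i < j + M)%nat /\ 0 <= s i /\ s (S i) <= 0.
Proof.
  intros HM H0 H1. induction M as [|M IH]; [lia|].
  destruct (Rle_lt_dec 0 (s (j + M)%nat)) as [Hpos|Hneg].
  - exists (j + M)%nat. rewrite <- Nat.add_succ_r. split; [lia | auto].
  - destruct M as [|M]; [rewrite Nat.add_0_r in Hneg; lra|].
    destruct IH as [i [Hi Hs]]; [lia | lra |]. exists i. split; [lia | auto].
Qed.

(* Barycentric coordinates with respect to [c] are read off from the
   orientations: [z - c = a (u - c) + b (v - c)] with
   [b = orient c u z / D], [a = - orient c v z / D] and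
   [orient u v z = D (1 - a - b)], where [D = orient c u v]. *)
Lemma in_triangle c u v z :
  0 < orient c u v -> 0 <= orient c u z -> orient c v z <= 0 -> 0 <= orient u v z ->
  exists a b, 0 <= a /\ 0 <= b /\ a + b <= 1 /\
    z = Cplus c (Cplus (Cmult (RtoC a) (Cminus u c)) (Cmult (RtoC b) (Cminus v c))).
Proof.
  unfold orient, cross; simpl.
  set (D := (fst u + - fst c) * (snd v + - snd c) - (snd u + - snd c) * (fst v + - fst c)).
  intros HD Hu Hv Huv.
  set (a := - ((fst v + - fst c) * (snd z + - snd c) - (snd v + - snd c) * (fst z + - fst c)) / D).
  set (b := ((fst u + - fst c) * (snd z + - snd c) - (snd u + - snd c) * (fst z + - fst c)) / D).
  assert (Hab : 1 - a - b = ((fst v + - fst u) * (snd z + - snd u)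
                             - (snd v + - snd u) * (fst z + - fst u)) / D)
    by (unfold a, b, D in *; field; lra).
  exists a, b. repeat split.
  - unfold a; apply Rdiv_le_0_compat; lra.
  - unfold b; apply Rdiv_le_0_compat; lra.
  - assert (0 <= 1 - a - b); [rewrite Hab; apply Rdiv_le_0_compat|]; lra.
  - apply C_ext; simpl; unfold a, b, D in *; field; lra.
Qed.

Lemma fan_sector (c z : C) (V : nat -> C) (N : nat) :
  (0 < N)%nat ->
  V (2 * N)%nat = V 0%nat ->
  Cminus (V N) c = Copp (Cminus (V 0%nat) c) ->
  (forall i, (i < 2 * N)%nat -> 0 < orient c (V i) (V (S i))) ->
  (forall i, (i < 2 * N)%nat -> 0 <= orient (V i) (V (S i)) z) ->
  exists i a b, (i < 2 * N)%nat /\ 0 <= a /\ 0 <= b /\ a + b <= 1 /\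
    z = Cplus c (Cplus (Cmult (RtoC a) (Cminus (V i) c)) (Cmult (RtoC b) (Cminus (V (S i)) c))).
Proof.
  intros HN Hper Hanti Hc Hz.
  set (s := fun i => orient c (V i) z).
  assert (HsN : s N = - s 0%nat) by (unfold s, orient; rewrite Hanti, cross_opp_l; reflexivity).
  assert (Hs2N : s (2 * N)%nat = s 0%nat) by (unfold s; rewrite Hper; reflexivity).
  assert (Hi : exists i, (i < 2 * N)%nat /\ 0 <= s i /\ s (S i) <= 0).
  { destruct (Rle_lt_dec 0 (s 0%nat)).
    - destruct (sign_change s 0 N) as [i [Hi Hs]]; simpl; auto; [lra|].
      exists i; split; [lia | auto].
    - destruct (sign_change s N N) as [i [Hi Hs]]; auto; [lra| |].
      + replace (N + N)%nat with (2 * N)%nat by lia. lra.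
      + exists i; split; [lia | auto]. }
  destruct Hi as [i [Hi [Hs1 Hs2]]].
  destruct (in_triangle c (V i) (V (S i)) z) as [a [b Hab]]; auto.
  exists i, a, b. auto.
Qed.

(* [c] is the midpoint of [V 0] and [V N], so the fan triangle [c, V i, V (S i)]
   is itself a combination of four vertices. *)
Lemma conv_fan (c z : C) (V : nat -> C) (N : nat) :
  (0 < N)%nat ->
  V (2 * N)%nat = V 0%nat ->
  Cminus (V N) c = Copp (Cminus (V 0%nat) c) ->
  (forall i, (i < 2 * N)%nat -> 0 < orient c (V i) (V (S i))) ->
  (forall i, (i < 2 * N)%nat -> 0 <= orient (V i) (V (S i)) z) ->
  conv (fun v => exists i, (i <= 2 * N)%nat /\ v = V i) z.
Proof.
  intros HN Hper Hanti Hc Hz.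
  destruct (fan_sector c z V N) as [i [a [b [Hi [Ha [Hb [Hab ->]]]]]]]; auto.
  assert (Hmid : c = Cmult (RtoC (/ 2)) (Cplus (V 0%nat) (V N))).
  { apply C_ext; [apply (f_equal fst) in Hanti | apply (f_equal snd) in Hanti];
      simpl in *; lra. }
  set (e := (1 - a - b) / 2).
  replace (Cplus c _) with (comb ((e, V 0%nat) :: (e, V N) :: (a, V i) :: (b, V (S i)) :: nil))
    by (unfold comb, e; rewrite Hmid; apply C_ext; simpl; field).
  apply conv_intro.
  - unfold e; repeat apply weights_in_cons; auto using weights_in_nil;
      try lra; (eexists; split; [|reflexivity]; lia).
  - unfold wsum, e; simpl; field.
Qed.

Section Zonotope.
Variables (n : nat) (p : R).
Hypothesis Hn : (1 <= n)%nat.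
Hypothesis Hp : 1 < p.

Definition theta : R := 2 * PI / INR n.

Definition qpow (j : nat) : C := Cpow (qbase n p) j.

Lemma INR_n_pos : 0 < INR n.
Proof. apply lt_0_INR; lia. Qed.

Lemma pow_p_pos j : 0 < p ^ j.
Proof. apply pow_lt; lra. Qed.

Lemma n_theta : INR n * theta = 2 * PI.
Proof. unfold theta. field. apply Rgt_not_eq, INR_n_pos. Qed.

Lemma qpow_polar j : qpow j = (p ^ j * cos (INR j * theta), p ^ j * sin (INR j * theta)).
Proof.
  unfold qpow; induction j as [|j IH].
  - simpl. rewrite Rmult_0_l, cos_0, sin_0. C_ring.
  - simpl Cpow. rewrite IH. unfold qbase, Cexpi. fold theta. rewrite S_INR.
    replace ((INR j + 1) * theta) with (INR j * theta + theta) by ring.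
    rewrite cos_plus, sin_plus. C_ring.
Qed.

Lemma qpow_n : qpow n = RtoC (p ^ n).
Proof. rewrite qpow_polar, n_theta, cos_2PI, sin_2PI. C_ring. Qed.

Definition offset (a j : nat) : nat := if (a <=? j)%nat then (j - a)%nat else (j + n - a)%nat.

Definition shift (a r : nat) : nat := if (a + r <? n)%nat then (a + r)%nat else (a + r - n)%nat.

Lemma offset_lt a j : (a <= n)%nat -> (j < n)%nat -> (offset a j < n)%nat.
Proof. intros; unfold offset; destruct (Nat.leb_spec a j); lia. Qed.

Lemma offset_self a : offset a a = 0%nat.
Proof. unfold offset. rewrite Nat.leb_refl. lia. Qed.

Lemma offset_inj a j k : (a < n)%nat -> (j < n)%nat -> (k < n)%nat ->
  offset a j = offset a k -> j = k.
Proof. intros; unfold offset in *; destruct (Nat.leb_spec a j), (Nat.leb_spec a k); lia. Qed.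

Lemma shift_lt a r : (a < n)%nat -> (r < n)%nat -> (shift a r < n)%nat.
Proof. intros; unfold shift; destruct (Nat.ltb_spec (a + r) n); lia. Qed.

Lemma offset_shift a r : (a < n)%nat -> (r < n)%nat -> offset a (shift a r) = r.
Proof.
  intros; unfold shift, offset; destruct (Nat.ltb_spec (a + r) n);
    [destruct (Nat.leb_spec a (a + r)) | destruct (Nat.leb_spec a (a + r - n))]; lia.
Qed.

Lemma offset_trans a j k : (a < n)%nat -> (j < n)%nat -> (k < n)%nat ->
  offset j k = if (offset a j <=? offset a k)%nat then (offset a k - offset a j)%nat
               else (offset a k + n - offset a j)%nat.
Proof.
  intros. unfold offset.
  destruct (Nat.leb_spec a j), (Nat.leb_spec a k), (Nat.leb_spec j k);
    match goal with |- context [Nat.leb ?x ?y] => destruct (Nat.leb_spec x y) end; lia.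
Qed.

Lemma theta_angle r : INR r * theta = PI * (INR (2 * r) / INR n).
Proof. unfold theta. rewrite mult_INR. simpl INR. field. apply Rgt_not_eq, INR_n_pos. Qed.

Lemma ratio_nonneg a : 0 <= INR a / INR n.
Proof. apply Rdiv_le_0_compat; [apply pos_INR | apply INR_n_pos]. Qed.

Lemma ratio_le a k : (a <= k * n)%nat -> INR a / INR n <= INR k.
Proof.
  intros. apply Rle_div_l; [apply INR_n_pos|]. rewrite <- mult_INR. apply le_INR; auto.
Qed.

Lemma ratio_lt a k : (a < k * n)%nat -> INR a / INR n < INR k.
Proof.
  intros. apply Rlt_div_l; [apply INR_n_pos|]. rewrite <- mult_INR. apply lt_INR; auto.
Qed.

Lemma ratio_ge a k : (k * n <= a)%nat -> INR k <= INR a / INR n.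
Proof.
  intros. apply Rle_div_r; [apply INR_n_pos|]. rewrite <- mult_INR. apply le_INR; auto.
Qed.

Lemma sin_theta_nonneg r : (2 * r <= n)%nat -> 0 <= sin (INR r * theta).
Proof.
  intros H. rewrite theta_angle. pose proof PI_RGT_0.
  pose proof (ratio_nonneg (2 * r)). pose proof (ratio_le (2 * r) 1 ltac:(lia)).
  simpl INR in *. apply sin_ge_0; nra.
Qed.

Lemma sin_theta_pos r : (0 < r)%nat -> (2 * r < n)%nat -> 0 < sin (INR r * theta).
Proof.
  intros H0 H. rewrite theta_angle. pose proof PI_RGT_0.
  assert (0 < INR (2 * r) / INR n) by (apply Rdiv_lt_0_compat; [apply lt_0_INR; lia | apply INR_n_pos]).
  pose proof (ratio_lt (2 * r) 1 ltac:(lia)). simpl INR in *. apply sin_gt_0; nra.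
Qed.

Lemma sin_theta_nonpos r : (r < n)%nat -> (r = 0%nat \/ (n <= 2 * r)%nat) ->
  sin (INR r * theta) <= 0.
Proof.
  intros Hr [->|H]; [simpl; rewrite Rmult_0_l, sin_0; lra|].
  rewrite theta_angle. pose proof PI_RGT_0.
  pose proof (ratio_ge (2 * r) 1 ltac:(lia)). pose proof (ratio_le (2 * r) 2 ltac:(lia)).
  simpl INR in *. apply sin_le_0; nra.
Qed.

Lemma cross_qpow j k : (j < n)%nat -> (k < n)%nat ->
  cross (qpow j) (qpow k) = p ^ j * p ^ k * sin (INR (offset j k) * theta).
Proof.
  intros Hj Hk. rewrite !qpow_polar. unfold cross; simpl.
  assert (E : sin (INR (offset j k) * theta) = sin (INR k * theta - INR j * theta)).
  { unfold offset. destruct (Nat.leb_spec j k).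
    - rewrite minus_INR by lia. f_equal; ring.
    - rewrite minus_INR, plus_INR by lia.
      rewrite <- (sin_period (INR k * theta - INR j * theta) 1). f_equal.
      simpl INR. replace (2 * 1 * PI) with (INR n * theta) by (rewrite n_theta; ring). ring. }
  rewrite E, sin_minus. ring.
Qed.

Lemma cross_qpow_nonneg j k : (j < n)%nat -> (k < n)%nat -> (2 * offset j k <= n)%nat ->
  0 <= cross (qpow j) (qpow k).
Proof.
  intros. rewrite cross_qpow by auto.
  apply Rmult_le_pos; [left; apply Rmult_lt_0_compat; apply pow_p_pos | apply sin_theta_nonneg; auto].
Qed.

Lemma cross_qpow_pos j k : (j < n)%nat -> (k < n)%nat ->
  (0 < offset j k)%nat -> (2 * offset j k < n)%nat -> 0 < cross (qpow j) (qpow k).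
Proof.
  intros. rewrite cross_qpow by auto.
  apply Rmult_lt_0_compat; [apply Rmult_lt_0_compat; apply pow_p_pos | apply sin_theta_pos; auto].
Qed.

Lemma cross_qpow_nonpos j k : (j < n)%nat -> (k < n)%nat ->
  (offset j k = 0%nat \/ (n <= 2 * offset j k)%nat) -> cross (qpow j) (qpow k) <= 0.
Proof.
  intros. rewrite cross_qpow by auto.
  assert (sin (INR (offset j k) * theta) <= 0) by (apply sin_theta_nonpos; auto; apply offset_lt; lia).
  assert (0 < p ^ j * p ^ k) by (apply Rmult_lt_0_compat; apply pow_p_pos). nra.
Qed.

(** * The vertex cycle of the zonotope [{sum t_j q^j | t in [0,1]^n}] *)

Definition half : nat := Nat.div2 n.

Lemma half_spec : n = (2 * half)%nat \/ n = S (2 * half).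
Proof.
  unfold half. destruct (Nat.Even_or_Odd n) as [[m ->]|[m ->]].
  - rewrite Nat.div2_double. auto.
  - rewrite Nat.add_1_r, Nat.div2_succ_double. auto.
Qed.

Definition arc (b len j : nat) : R := if (offset b j <? len)%nat then 1 else 0.

(* Going around the zonotope, the vertex [2b] is the sum of [q^j] over the arc of
   length [half] starting at [b], and the vertex [2b + 1] over the arc of length
   [half + 1]. *)
Definition vertex (i : nat) : C :=
  lin n qpow (arc (Nat.div2 i) (if Nat.odd i then S half else half)).

Definition center : C := lin n qpow (fun _ => / 2).

Lemma vertex_even b : vertex (2 * b) = lin n qpow (arc b half).
Proof.
  unfold vertex. rewrite Nat.div2_double.
  replace (Nat.odd (2 * b)) with false by (rewrite Nat.odd_mul; reflexivity). reflexivity.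
Qed.

Lemma vertex_odd b : vertex (S (2 * b)) = lin n qpow (arc b (S half)).
Proof.
  unfold vertex. rewrite Nat.div2_succ_double.
  replace (Nat.odd (S (2 * b))) with true
    by (rewrite Nat.odd_succ, Nat.even_mul; reflexivity). reflexivity.
Qed.

Lemma arc_grow b j : (b < n)%nat -> (j < n)%nat ->
  arc b (S half) j = arc b half j + (if Nat.eqb j (shift b half) then 1 else 0).
Proof.
  intros Hb Hj. pose proof half_spec.
  pose proof (offset_shift b half Hb ltac:(lia)) as Hs. unfold arc.
  destruct (Nat.eqb_spec j (shift b half)) as [->|Hne].
  - rewrite Hs, Nat.ltb_irrefl. destruct (Nat.ltb_spec half (S half)); lia || lra.
  - assert (offset b j <> half).
    { intros E. apply Hne, (offset_inj b); auto; [apply shift_lt; lia | congruence]. }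
    destruct (Nat.ltb_spec (offset b j) (S half)), (Nat.ltb_spec (offset b j) half);
      lia || lra.
Qed.

Lemma arc_rotate b j : (b < n)%nat -> (j < n)%nat ->
  arc (S b) half j = arc b (S half) j - (if Nat.eqb j b then 1 else 0).
Proof.
  intros Hb Hj. pose proof half_spec. unfold arc, offset.
  destruct (Nat.eqb_spec j b) as [->|Hne].
  - rewrite Nat.leb_refl. destruct (Nat.leb_spec (S b) b); [lia|].
    destruct (Nat.ltb_spec (b + n - S b) half), (Nat.ltb_spec (b - b) (S half)); lia || lra.
  - destruct (Nat.leb_spec (S b) j), (Nat.leb_spec b j); try lia;
      match goal with |- context [Nat.ltb ?x half] => destruct (Nat.ltb_spec x half) end;
      match goal with |- context [Nat.ltb ?x (S half)] => destruct (Nat.ltb_spec x (S half)) end;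
      lia || lra.
Qed.

Lemma vertex_step_even b : (b < n)%nat ->
  vertex (S (2 * b)) = Cplus (vertex (2 * b)) (qpow (shift b half)).
Proof.
  intros Hb. pose proof half_spec.
  rewrite vertex_odd, vertex_even, <- (lin_indicator n qpow (shift b half)), <- lin_plus
    by (apply shift_lt; lia).
  apply lin_ext. intros; apply arc_grow; auto.
Qed.

Lemma vertex_step_odd b : (b < n)%nat ->
  vertex (2 * S b) = Cplus (vertex (S (2 * b))) (Copp (qpow b)).
Proof.
  intros Hb. rewrite vertex_even, vertex_odd, <- (lin_indicator _ _ b Hb), <- lin_opp, <- lin_plus.
  apply lin_ext. intros; apply arc_rotate; auto.
Qed.

Lemma vertex_period : vertex (2 * n) = vertex 0.
Proof.
  change (vertex 0) with (vertex (2 * 0)). rewrite !vertex_even. apply lin_ext. intros j Hj.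
  unfold arc, offset. destruct (Nat.leb_spec n j), (Nat.leb_spec 0 j); try lia.
  replace (j + n - n)%nat with (j - 0)%nat by lia. reflexivity.
Qed.

Lemma vertex_antipodal : Cminus (vertex n) center = Copp (Cminus (vertex 0) center).
Proof.
  assert (Hn' : vertex n = lin n qpow (arc half (n - half))).
  { destruct half_spec as [E|E]; rewrite E at 1;
      [rewrite vertex_even | rewrite vertex_odd]; f_equal; f_equal; lia. }
  change (vertex 0) with (vertex (2 * 0)). rewrite Hn', vertex_even. unfold center. rewrite !lin_minus, <- lin_opp.
  apply lin_ext. intros j Hj. pose proof half_spec. unfold arc, offset.
  destruct (Nat.leb_spec half j), (Nat.leb_spec 0 j); try lia;
    match goal with |- context [Nat.ltb ?x (n - half)] => destruct (Nat.ltb_spec x (n - half)) end;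
    destruct (Nat.ltb_spec (j - 0) half); lia || lra.
Qed.

Section Orientation.
Hypothesis Hn3 : (3 <= n)%nat.

Lemma half_pos : (1 <= half)%nat.
Proof. destruct half_spec; lia. Qed.

Lemma center_turn_even b : (b < n)%nat ->
  0 < cross (Cminus (vertex (2 * b)) center) (qpow (shift b half)).
Proof.
  intros Hb. pose proof half_spec. pose proof half_pos.
  set (k := shift b half). assert (Hk : (k < n)%nat) by (apply shift_lt; lia).
  assert (Hok : offset b k = half) by (apply offset_shift; lia).
  rewrite vertex_even. unfold center. rewrite lin_minus, cross_lin_l.
  apply (Rsum_pos _ _ (shift b (half - 1))); [| apply shift_lt; lia |].
  - intros j Hj. pose proof (offset_lt b j ltac:(lia) Hj). unfold arc.
    destruct (Nat.ltb_spec (offset b j) half).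
    + assert (0 <= cross (qpow j) (qpow k)); [|lra].
      apply cross_qpow_nonneg; auto. rewrite (offset_trans b j k), Hok by auto.
      destruct (Nat.leb_spec (offset b j) half); lia.
    + assert (cross (qpow j) (qpow k) <= 0); [|lra].
      apply cross_qpow_nonpos; auto. rewrite (offset_trans b j k), Hok by auto.
      destruct (Nat.leb_spec (offset b j) half); lia.
  - set (j := shift b (half - 1)). assert (Hj : (j < n)%nat) by (apply shift_lt; lia).
    assert (Hoj : offset b j = (half - 1)%nat) by (apply offset_shift; lia).
    unfold arc. rewrite Hoj. destruct (Nat.ltb_spec (half - 1) half); [|lia].
    assert (0 < cross (qpow j) (qpow k)); [|lra].
    apply cross_qpow_pos; auto; rewrite (offset_trans b j k), Hok, Hoj by auto;
      destruct (Nat.leb_spec (half - 1) half); lia.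
Qed.

Lemma center_turn_odd b : (b < n)%nat ->
  0 < cross (Cminus (vertex (S (2 * b))) center) (Copp (qpow b)).
Proof.
  intros Hb. pose proof half_spec. pose proof half_pos.
  rewrite vertex_odd. unfold center. rewrite lin_minus, cross_opp_r, cross_lin_l, <- Rsum_opp.
  rewrite (Rsum_ext _ _ (fun j => (arc b (S half) j - / 2) * cross (qpow b) (qpow j)))
    by (intros; rewrite (cross_anti (qpow b)); ring).
  apply (Rsum_pos _ _ (shift b 1)); [| apply shift_lt; lia |].
  - intros j Hj. pose proof (offset_lt b j ltac:(lia) Hj). unfold arc.
    destruct (Nat.ltb_spec (offset b j) (S half)).
    + assert (0 <= cross (qpow b) (qpow j)); [apply cross_qpow_nonneg; auto; lia | lra].
    + assert (cross (qpow b) (qpow j) <= 0); [apply cross_qpow_nonpos; auto; lia | lra].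
  - set (j := shift b 1). assert (Hj : (j < n)%nat) by (apply shift_lt; lia).
    assert (Hoj : offset b j = 1%nat) by (apply offset_shift; lia).
    unfold arc. rewrite Hoj. destruct (Nat.ltb_spec 1 (S half)); [|lia].
    assert (0 < cross (qpow b) (qpow j)); [apply cross_qpow_pos; auto; lia | lra].
Qed.

Lemma edge_turn_even b t : (b < n)%nat -> (forall j, (j < n)%nat -> 0 <= t j <= 1) ->
  0 <= cross (qpow (shift b half)) (Cminus (lin n qpow t) (vertex (2 * b))).
Proof.
  intros Hb Ht. pose proof half_spec. pose proof half_pos.
  set (k := shift b half). assert (Hk : (k < n)%nat) by (apply shift_lt; lia).
  assert (Hok : offset b k = half) by (apply offset_shift; lia).
  rewrite vertex_even, lin_minus, cross_lin_r.
  apply Rsum_nonneg. intros j Hj. specialize (Ht j Hj).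
  pose proof (offset_lt b j ltac:(lia) Hj). unfold arc.
  destruct (Nat.ltb_spec (offset b j) half).
  - assert (cross (qpow k) (qpow j) <= 0); [|nra].
    apply cross_qpow_nonpos; auto. rewrite (offset_trans b k j), Hok by auto.
    destruct (Nat.leb_spec half (offset b j)); lia.
  - assert (0 <= cross (qpow k) (qpow j)); [|nra].
    apply cross_qpow_nonneg; auto. rewrite (offset_trans b k j), Hok by auto.
    destruct (Nat.leb_spec half (offset b j)); lia.
Qed.

Lemma edge_turn_odd b t : (b < n)%nat -> (forall j, (j < n)%nat -> 0 <= t j <= 1) ->
  0 <= cross (Copp (qpow b)) (Cminus (lin n qpow t) (vertex (S (2 * b)))).
Proof.
  intros Hb Ht. pose proof half_spec. pose proof half_pos.
  rewrite vertex_odd, lin_minus, cross_opp_l, cross_lin_r, <- Rsum_opp.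
  apply Rsum_nonneg. intros j Hj. specialize (Ht j Hj).
  rewrite (cross_anti (qpow b)).
  pose proof (offset_lt b j ltac:(lia) Hj). unfold arc.
  assert (Hr : offset j b = if (offset b j <=? 0)%nat then (0 - offset b j)%nat
                            else (0 + n - offset b j)%nat)
    by (rewrite (offset_trans b j b), offset_self by auto; reflexivity).
  destruct (Nat.ltb_spec (offset b j) (S half)).
  - assert (cross (qpow j) (qpow b) <= 0); [|nra].
    apply cross_qpow_nonpos; auto. rewrite Hr. destruct (Nat.leb_spec (offset b j) 0); lia.
  - assert (0 <= cross (qpow j) (qpow b)); [|nra].
    apply cross_qpow_nonneg; auto. rewrite Hr. destruct (Nat.leb_spec (offset b j) 0); lia.
Qed.

Lemma vertex_center_orient i : (i < 2 * n)%nat ->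
  0 < orient center (vertex i) (vertex (S i)).
Proof.
  intros Hi. destruct (Nat.Even_or_Odd i) as [[b ->]|[b ->]].
  - rewrite vertex_step_even, orient_step_from by lia. apply center_turn_even; lia.
  - rewrite Nat.add_1_r. replace (S (S (2 * b))) with (2 * S b)%nat by lia.
    rewrite vertex_step_odd, orient_step_from by lia. apply center_turn_odd; lia.
Qed.

Lemma vertex_edge_orient t i : (forall j, (j < n)%nat -> 0 <= t j <= 1) -> (i < 2 * n)%nat ->
  0 <= orient (vertex i) (vertex (S i)) (lin n qpow t).
Proof.
  intros Ht Hi. destruct (Nat.Even_or_Odd i) as [[b ->]|[b ->]].
  - rewrite vertex_step_even, orient_step_to by lia. apply edge_turn_even; auto; lia.
  - rewrite Nat.add_1_r. replace (S (S (2 * b))) with (2 * S b)%nat by lia.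
    rewrite vertex_step_odd, orient_step_to by lia. apply edge_turn_odd; auto; lia.
Qed.

Lemma zonotope_conv_vertices t : (forall j, (j < n)%nat -> 0 <= t j <= 1) ->
  conv (fun v => exists i, (i <= 2 * n)%nat /\ v = vertex i) (lin n qpow t).
Proof.
  intros Ht. apply (conv_fan center).
  - lia.
  - apply vertex_period.
  - apply vertex_antipodal.
  - apply vertex_center_orient.
  - intros; apply vertex_edge_orient; auto.
Qed.

End Orientation.

Lemma Zmod_offset b k : (b < n)%nat -> (k < n)%nat ->
  ((Z.of_nat k - Z.of_nat (S b) + 1) mod Z.of_nat n)%Z = Z.of_nat (offset b k).
Proof.
  intros Hb Hk. unfold offset. destruct (Nat.leb_spec b k).
  - rewrite Z.mod_small by lia. lia.
  - replace (Z.of_nat k - Z.of_nat (S b) + 1)%Z with (Z.of_nat (k + n - b) + (-1) * Z.of_nat n)%Z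
      by lia.
    rewrite Z_mod_plus_full, Z.mod_small by lia. reflexivity.
Qed.

Lemma Zleb_pred_ltb o m : Z.leb (Z.of_nat o) (Z.of_nat m - 1) = Nat.ltb o m.
Proof. destruct (Z.leb_spec (Z.of_nat o) (Z.of_nat m - 1)), (Nat.ltb_spec o m); lia. Qed.

Lemma inKlow_arc b k : (b < n)%nat -> (k < n)%nat -> inKlow n (S b) k = Nat.ltb (offset b k) half.
Proof.
  intros. unfold inKlow. rewrite Zmod_offset by auto.
  replace (Z.of_nat n / 2)%Z with (Z.of_nat half); [apply Zleb_pred_ltb|].
  destruct half_spec as [E|E]; rewrite E; Z.div_mod_to_equations; lia.
Qed.

Lemma inKup_arc b k : (b < n)%nat -> (k < n)%nat ->
  inKup n (S b) k = Nat.ltb (offset b k) (n - half).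
Proof.
  intros. unfold inKup. rewrite Zmod_offset by auto.
  replace ((Z.of_nat n + 1) / 2)%Z with (Z.of_nat (n - half)); [apply Zleb_pred_ltb|].
  destruct half_spec as [E|E]; rewrite E; rewrite Nat2Z.inj_sub by lia;
    Z.div_mod_to_equations; lia.
Qed.

Lemma vodd_arc b : (b < n)%nat -> vodd n (qbase n p) (S b) = lin n qpow (arc b half).
Proof.
  intros Hb. apply Csum_ext. intros k Hk.
  rewrite inKlow_arc by auto. unfold arc, qpow. destruct (Nat.ltb _ _); C_ring.
Qed.

Lemma veven_arc b : (b < n)%nat -> veven n (qbase n p) (S b) = lin n qpow (arc b (n - half)).
Proof.
  intros Hb. apply Csum_ext. intros k Hk.
  rewrite inKup_arc by auto. unfold arc, qpow. destruct (Nat.ltb _ _); C_ring.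
Qed.

Lemma vertex_even_in_Vall b : (b <= n)%nat -> Vall n (qbase n p) (vertex (2 * b)).
Proof.
  intros Hb. destruct (Nat.eq_dec b n) as [->|Hne].
  - rewrite vertex_period. exists 1%nat. split; [lia|]. left.
    rewrite vodd_arc by lia. reflexivity.
  - exists (S b). split; [lia|]. left. rewrite vodd_arc, vertex_even by lia. reflexivity.
Qed.

(* For even [n], [q^half = - p^half] is real, so [q^(b + half)] points opposite to [q^b]. *)
Lemma qpow_shift_half b : n = (2 * half)%nat -> (b < n)%nat ->
  qpow (shift b half) = Cmult (RtoC (- (p ^ shift b half / p ^ b))) (qpow b).
Proof.
  intros HE Hb.
  assert (Hpi : INR half * theta = PI).
  { unfold theta. rewrite HE, mult_INR. simpl INR. field.
    assert (0 < INR half) by (apply lt_0_INR; lia). lra. }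
  assert (Hangle : cos (INR (shift b half) * theta) = - cos (INR b * theta) /\
                   sin (INR (shift b half) * theta) = - sin (INR b * theta)).
  { unfold shift. destruct (Nat.ltb_spec (b + half) n).
    - rewrite plus_INR, Rmult_plus_distr_r, Hpi, neg_cos, neg_sin. auto.
    - rewrite minus_INR, plus_INR by lia.
      rewrite <- (cos_period _ 1), <- (sin_period _ 1).
      replace ((INR b + INR half - INR n) * theta + 2 * INR 1 * PI) with (INR b * theta + PI)
        by (rewrite !Rmult_minus_distr_r, Rmult_plus_distr_r, Hpi, n_theta; simpl INR; ring).
      rewrite neg_cos, neg_sin. auto. }
  destruct Hangle as [Hc Hs]. pose proof (pow_p_pos b).
  rewrite !qpow_polar. apply C_ext; simpl; rewrite ?Hc, ?Hs; field; lra.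
Qed.

Lemma vertex_odd_in_conv_Vall b : (b < n)%nat -> conv (Vall n (qbase n p)) (vertex (S (2 * b))).
Proof.
  intros Hb. destruct half_spec as [HE|HO].
  - set (mu := p ^ shift b half / p ^ b).
    assert (Hmu : 0 < mu) by (apply Rdiv_lt_0_compat; apply pow_p_pos).
    assert (E : vertex (S (2 * b)) =
      Cplus (Cmult (RtoC (/ (1 + mu))) (vertex (2 * b)))
            (Cmult (RtoC (1 - / (1 + mu))) (vertex (2 * S b)))).
    { rewrite (vertex_step_odd b Hb), (vertex_step_even b Hb), (qpow_shift_half b HE Hb).
      fold mu. apply C_ext; simpl; field; lra. }
    rewrite E. apply conv_segment; try apply vertex_even_in_Vall; try lia.
    split; [left; apply Rinv_0_lt_compat; lra|].
    rewrite <- Rinv_1. apply Rinv_le_contravar; lra.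
  - apply conv_incl. exists (S b). split; [lia|]. right.
    rewrite vertex_odd, veven_arc by lia. do 2 f_equal. lia.
Qed.

Lemma vertex_in_conv_Vall i : (i <= 2 * n)%nat -> conv (Vall n (qbase n p)) (vertex i).
Proof.
  intros Hi. destruct (Nat.Even_or_Odd i) as [[b ->]|[b ->]].
  - apply conv_incl, vertex_even_in_Vall. lia.
  - rewrite Nat.add_1_r. apply vertex_odd_in_conv_Vall. lia.
Qed.

Lemma zonotope_in_conv_Vall_large t : (3 <= n)%nat ->
  (forall j, (j < n)%nat -> 0 <= t j <= 1) -> conv (Vall n (qbase n p)) (lin n qpow t).
Proof.
  intros Hn3 Ht. apply (conv_conv_sub (fun v => exists i, (i <= 2 * n)%nat /\ v = vertex i)).
  - intros v [i [Hi ->]]. apply vertex_in_conv_Vall; auto.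
  - apply zonotope_conv_vertices; auto.
Qed.

End Zonotope.

Lemma zonotope_in_conv_Vall_small n p t : (1 <= n <= 2)%nat -> 1 < p ->
  (forall j, (j < n)%nat -> 0 <= t j <= 1) -> conv (Vall n (qbase n p)) (lin n (qpow n p) t).
Proof.
  intros Hn Hp Ht. assert (n = 1%nat \/ n = 2%nat) as [->| ->] by lia.
  - pose proof (Ht 0%nat ltac:(lia)).
    assert (E0 : vodd 1 (qbase 1 p) 1 = RtoC 0) by (unfold vodd; simpl; C_ring).
    assert (E1 : veven 1 (qbase 1 p) 1 = RtoC 1) by (unfold veven; simpl; C_ring).
    replace (lin 1 (qpow 1 p) t) with
      (Cplus (Cmult (RtoC (1 - t 0%nat)) (vodd 1 (qbase 1 p) 1))
             (Cmult (RtoC (1 - (1 - t 0%nat))) (veven 1 (qbase 1 p) 1)))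
      by (rewrite E0, E1; unfold lin, qpow; C_ring).
    apply conv_segment; [lra | exists 1%nat; split; auto ..].
  - pose proof (Ht 0%nat ltac:(lia)). pose proof (Ht 1%nat ltac:(lia)).
    assert (Hq : qbase 2 p = RtoC (- p)).
    { unfold qbase, Cexpi. replace (2 * PI / INR 2) with PI by (simpl; field).
      rewrite cos_PI, sin_PI. C_ring. }
    assert (E1 : veven 2 (qbase 2 p) 1 = RtoC 1) by (unfold veven; simpl; C_ring).
    assert (E2 : veven 2 (qbase 2 p) 2 = RtoC (- p)) by (unfold veven; simpl; rewrite Hq; C_ring).
    set (a := (t 0%nat - p * t 1%nat + p) / (1 + p)).
    replace (lin 2 (qpow 2 p) t) with
      (Cplus (Cmult (RtoC a) (veven 2 (qbase 2 p) 1)) (Cmult (RtoC (1 - a)) (veven 2 (qbase 2 p) 2)))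
      by (rewrite E1, E2; unfold lin, qpow; simpl; rewrite Hq; apply C_ext; simpl; unfold a; field; lra).
    apply conv_segment; [| exists 1%nat | exists 2%nat]; auto.
    unfold a. split; [apply Rdiv_le_0_compat; nra|].
    apply Rle_div_l; nra.
Qed.

Lemma zonotope_in_conv_Vall n p t : (1 <= n)%nat -> 1 < p ->
  (forall j, (j < n)%nat -> 0 <= t j <= 1) -> conv (Vall n (qbase n p)) (lin n (qpow n p) t).
Proof.
  intros Hn Hp Ht. destruct (le_lt_dec n 2).
  - apply zonotope_in_conv_Vall_small; auto.
  - apply zonotope_in_conv_Vall_large; auto.
Qed.

Lemma Series_mono (a b : nat -> R) : (forall j, a j <= b j) -> ex_series a -> ex_series b ->
  Series a <= Series b.
Proof.
  intros H Ha Hb.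
  assert (Hz : Series (fun _ => 0) = 0)
    by (rewrite (Series_ext _ (fun j => 0 * a j)) by (intros; ring); rewrite Series_scal_l; ring).
  assert (Series (fun _ => 0) <= Series (fun j => b j - a j)).
  { apply Series_le; [intros j; specialize (H j); lra|].
    exact (ex_series_minus (V := R_NormedModule) _ _ Hb Ha). }
  rewrite Hz, Series_minus in H0 by auto. lra.
Qed.

Lemma ex_series_bounded_geom (a : nat -> R) r B : 0 <= r < 1 ->
  (forall j, Rabs (a j) <= B * r ^ j) -> ex_series a.
Proof.
  intros Hr H.
  apply (ex_series_le (K := R_AbsRing) (V := R_CompleteNormedModule) _ (fun j => B * r ^ j)); auto.
  apply (ex_series_scal_l (V := R_NormedModule) B), ex_series_geom. rewrite Rabs_pos_eq; lra.
Qed.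

Lemma sum_f_R0_single (f : nat -> R) N j0 : (j0 <= N)%nat ->
  (forall j, (j <= N)%nat -> j <> j0 -> f j = 0) -> sum_f_R0 f N = f j0.
Proof.
  induction N as [|N IH]; intros Hj H; simpl.
  - replace j0 with 0%nat by lia. reflexivity.
  - destruct (Nat.eq_dec j0 (S N)) as [->|Hne].
    + assert (Hz : forall M, (M <= N)%nat -> sum_f_R0 f M = 0).
      { induction M as [|M IHM]; intros HM; simpl; [apply H; lia|].
        rewrite IHM, (H (S M)) by lia. ring. }
      rewrite Hz by lia. ring.
    + rewrite IH, (H (S N)) by first [lia | intros; apply H; lia]. ring.
Qed.

Lemma is_series_C_real_scal (a : nat -> R) l (z : C) : is_series a l ->
  is_series (V := C_R_NormedModule) (fun j => Cmult (RtoC (a j)) z) (Cmult (RtoC l) z).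
Proof.
  intros H.
  assert (E : forall r, Cmult (RtoC r) z = scal (V := C_R_NormedModule) r z)
    by (intros r; rewrite scal_R_Cmult; reflexivity).
  rewrite E. apply (is_series_ext (fun j => scal (V := C_R_NormedModule) (a j) z));
    [intros; rewrite E; reflexivity|].
  unfold is_series in *.
  apply (filterlim_ext (fun N => scal (V := C_R_NormedModule) (sum_n a N) z)).
  { intros N. induction N as [|N IH]; [rewrite !sum_O; reflexivity|].
    rewrite !sum_Sn, <- IH. exact (scal_distr_r _ _ _). }
  apply (filterlim_comp nat R C (sum_n a) (fun r => scal (V := C_R_NormedModule) r z)
           eventually (locally l)); [exact H|].
  apply (filterlim_scal_l (K := R_AbsRing) (V := C_R_NormedModule)).
Qed.

Lemma is_series_Csum (F : nat -> nat -> C) (L : nat -> C) m :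
  (forall k, (k < m)%nat -> is_series (V := C_R_NormedModule) (F k) (L k)) ->
  is_series (V := C_R_NormedModule) (fun j => Csum m (fun k => F k j)) (Csum m L).
Proof.
  induction m as [|m IH]; intros H; simpl.
  - unfold is_series. apply (filterlim_ext (fun _ => RtoC 0)); [|apply filterlim_const].
    intros N. induction N as [|N IHN]; [rewrite sum_O; reflexivity|].
    rewrite sum_Sn, <- IHN. symmetry. apply (plus_zero_r (G := C_R_NormedModule)).
  - apply (is_series_plus (V := C_R_NormedModule) (fun j => Csum m (fun k => F k j)) (F m)).
    + apply IH; intros; apply H; lia.
    + apply H; lia.
Qed.

Lemma is_series_C_unique (a : nat -> C) l1 l2 :
  is_series (V := C_R_NormedModule) a l1 -> is_series (V := C_R_NormedModule) a l2 -> l1 = l2.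
Proof. exact (filterlim_locally_unique (F := eventually) _ _ _). Qed.

(** * Regrouping the digit expansion along the residues modulo [n] *)

Section Expansion.
Variables (n : nat) (p : R).
Hypothesis Hn : (1 <= n)%nat.
Hypothesis Hp : 1 < p.

(* The exponent [k < n] with [s + k = 0 (mod n)]. *)
Definition negmod (s : nat) : nat := ((n - s mod n) mod n)%nat.

Lemma negmod_lt s : (negmod s < n)%nat.
Proof. apply Nat.mod_upper_bound. lia. Qed.

Lemma negmod_spec s : exists m, (s + negmod s = n * m)%nat.
Proof.
  unfold negmod. pose proof (Nat.div_mod_eq s n). pose proof (Nat.mod_upper_bound s n ltac:(lia)).
  destruct (Nat.eq_dec (s mod n) 0) as [Hz|Hz].
  - rewrite Hz, Nat.sub_0_r, Nat.Div0.mod_same. exists (s / n)%nat. lia.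
  - rewrite Nat.mod_small by lia. exists (S (s / n)). lia.
Qed.

Lemma negmod_unique s k m : (k < n)%nat -> (s + k = n * m)%nat -> k = negmod s.
Proof.
  intros Hk Hm. destruct (negmod_spec s) as [m' Hm']. pose proof (negmod_lt s).
  assert (m = m') as <- by nia. lia.
Qed.

(* Since [q^n = p^n] is real, [q^-(j+1) = p^-(j+1+k) q^k] with [k = negmod (j+1)];
   [weight k j] is the resulting contribution of the digit [x_(j+1)] to the
   coefficient of [q^k]. *)
Definition weight (k j : nat) : R := if Nat.eqb k (negmod (S j)) then / p ^ (S j + k) else 0.

Lemma weight_bounds k j : 0 <= weight k j <= (/ p) ^ j.
Proof.
  unfold weight. pose proof (pow_p_pos p Hp j).
  assert (0 < (/ p) ^ j) by (apply pow_lt, Rinv_0_lt_compat; lra).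
  destruct (Nat.eqb k (negmod (S j))); [|lra]. split.
  - left; apply Rinv_0_lt_compat, pow_p_pos; auto.
  - rewrite pow_inv. apply Rinv_le_contravar; auto. apply Rle_pow; [lra | lia].
Qed.

Lemma ex_series_digits_weight (x : nat -> R) m M k : (forall j, m <= x j <= M) ->
  ex_series (fun j => x (S j) * weight k j).
Proof.
  intros Hx. apply (ex_series_bounded_geom _ (/ p) (Rmax (Rabs m) (Rabs M))).
  - split; [left; apply Rinv_0_lt_compat; lra | rewrite <- Rinv_1; apply Rinv_lt_contravar; lra].
  - intros j. destruct (Hx (S j)). pose proof (weight_bounds k j).
    rewrite Rabs_mult, (Rabs_pos_eq (weight k j)) by lra.
    apply Rmult_le_compat; try apply Rabs_pos; try lra.
    unfold Rmax, Rabs. repeat destruct Rcase_abs; destruct Rle_dec; lra.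
Qed.

Lemma ex_series_weight k : ex_series (weight k).
Proof.
  apply (ex_series_ext (fun j => 1 * weight k j)); [intros; apply Rmult_1_l|].
  apply (ex_series_digits_weight (fun _ => 1) 1 1). intros; lra.
Qed.

Lemma Series_weight k : (k < n)%nat -> Series (weight k) = / (p ^ n - 1).
Proof.
  intros Hk. pose proof (Rlt_pow_R1 p n Hp ltac:(lia)).
  assert (Hperiod : forall j, weight k (n + j) = / p ^ n * weight k j).
  { intros j. unfold weight.
    replace (negmod (S (n + j))) with (negmod (S j)).
    2:{ destruct (negmod_spec (S j)) as [m Hm]. apply (negmod_unique _ _ (S m)); [apply negmod_lt | lia]. }
    destruct (Nat.eqb k (negmod (S j))); [|ring].
    replace (S (n + j) + k)%nat with (n + (S j + k))%nat by lia. rewrite pow_add, Rinv_mult. reflexivity. }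
  assert (Hfirst : sum_f_R0 (weight k) (Nat.pred n) = / p ^ n).
  { rewrite (sum_f_R0_single _ _ (n - 1 - k)); [| lia |].
    - unfold weight. replace (negmod (S (n - 1 - k))) with k by (apply (negmod_unique _ _ 1); auto; lia).
      rewrite Nat.eqb_refl. do 2 f_equal. lia.
    - intros j Hj Hne. unfold weight. destruct (Nat.eqb_spec k (negmod (S j))) as [E|]; auto.
      destruct (negmod_spec (S j)) as [m Hm]. rewrite <- E in Hm. exfalso.
      destruct m as [|[|m]]; nia. }
  assert (HS : Series (weight k) = / p ^ n + / p ^ n * Series (weight k)).
  { rewrite (Series_incr_n _ n) at 1 by (lia || apply ex_series_weight).
    rewrite Hfirst, (Series_ext _ _ Hperiod), Series_scal_l. reflexivity. }
  assert (p ^ n * Series (weight k) = 1 + Series (weight k)) by (rewrite HS at 1; field; lra).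
  apply (Rmult_eq_reg_l (p ^ n - 1)); [rewrite Rinv_r|]; lra.
Qed.

Definition coef (x : nat -> R) (k : nat) : R := Series (fun j => x (S j) * weight k j).

Lemma qbase_neq_0 : qbase n p <> RtoC 0.
Proof.
  intros H. pose proof (qpow_n n p Hn) as E. unfold qpow in E. rewrite H in E.
  replace (Cpow (RtoC 0) n) with (RtoC 0) in E
    by (destruct n; [lia | rewrite Cpow_S, Cmult_0_l; reflexivity]).
  apply (f_equal fst) in E. simpl in E. pose proof (pow_p_pos p Hp n). lra.
Qed.

Lemma digit_term_decomp (x : nat -> R) j :
  Cmult (RtoC (x (S j))) (Cinv (Cpow (qbase n p) (S j)))
  = Csum n (fun k => Cmult (RtoC (x (S j) * weight k j)) (qpow n p k)).
Proof.
  set (s := S j). set (k0 := negmod s). destruct (negmod_spec s) as [m Hm]. fold k0 in Hm.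
  rewrite (Csum_single _ _ k0 (negmod_lt s)).
  2:{ intros k Hk Hne. unfold weight. fold s k0.
      rewrite (proj2 (Nat.eqb_neq _ _) Hne). C_ring. }
  unfold weight. fold s k0. rewrite Nat.eqb_refl.
  assert (Hq : Cmult (Cpow (qbase n p) s) (qpow n p k0) = RtoC (p ^ (s + k0))).
  { unfold qpow. rewrite <- Cpow_add_r, Hm, Cpow_mult_r.
    change (Cpow (qbase n p) n) with (qpow n p n). rewrite (qpow_n n p Hn), <- RtoC_pow, pow_mult.
    reflexivity. }
  pose proof (pow_p_pos p Hp (s + k0)).
  rewrite RtoC_mult, RtoC_inv, <- Hq by lra. unfold qpow.
  field. split; apply Cpow_nz, qbase_neq_0.
Qed.

Lemma is_series_expansion (x : nat -> R) m M : (forall j, m <= x j <= M) ->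
  is_series (V := C_R_NormedModule)
    (fun j => Cmult (RtoC (x (S j))) (Cinv (Cpow (qbase n p) (S j)))) (lin n (qpow n p) (coef x)).
Proof.
  intros Hx. apply (is_series_ext (fun j => Csum n (fun k => Cmult (RtoC (x (S j) * weight k j)) (qpow n p k)))).
  { intros j. symmetry. apply digit_term_decomp. }
  apply is_series_Csum. intros k Hk.
  apply is_series_C_real_scal, Series_correct, (ex_series_digits_weight x m M); auto.
Qed.

Lemma coef_const m k : (k < n)%nat -> coef (fun _ => m) k = m / (p ^ n - 1).
Proof. intros Hk. unfold coef. rewrite (Series_scal_l m (weight k)), Series_weight by auto. reflexivity. Qed.

Lemma coef_bounds (x : nat -> R) m M k : (k < n)%nat -> (forall j, m <= x j <= M) ->
  m / (p ^ n - 1) <= coef x k <= M / (p ^ n - 1).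
Proof.
  intros Hk Hx. rewrite <- (coef_const m k), <- (coef_const M k) by auto.
  assert (Hm : m <= M) by (destruct (Hx 0%nat); lra).
  pose proof (ex_series_digits_weight (fun _ => m) m m k ltac:(intros; lra)).
  pose proof (ex_series_digits_weight (fun _ => M) M M k ltac:(intros; lra)).
  pose proof (ex_series_digits_weight x m M k Hx).
  unfold coef; split; apply Series_mono; auto;
    intros j; pose proof (weight_bounds k j); destruct (Hx (S j)); nra.
Qed.

Lemma coef_residue_digits (f : nat -> R) k : (k < n)%nat ->
  coef (fun s => f (negmod s)) k = f k / (p ^ n - 1).
Proof.
  intros Hk. rewrite <- (coef_const (f k) k) by auto. unfold coef. apply Series_ext. intros j.
  unfold weight. destruct (Nat.eqb_spec k (negmod (S j))) as [->|]; ring.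
Qed.

End Expansion.

(** * The hull of [Lambda] *)

Lemma fold_right_select (f : R -> R -> R) d l : (forall a b, f a b = a \/ f a b = b) ->
  fold_right f d l = d \/ In (fold_right f d l) l.
Proof.
  intros Hf. induction l as [|b l IH]; simpl; auto.
  destruct (Hf b (fold_right f d l)) as [-> | ->]; auto. destruct IH; auto.
Qed.

Lemma lmin_le A a : In a A -> lmin A <= a.
Proof.
  unfold lmin. generalize (hd 0 A). intros d. induction A as [|b A IH]; simpl; [tauto|].
  intros [->|H]; [apply Rmin_l | eapply Rle_trans; [apply Rmin_r | auto]].
Qed.

Lemma lmax_ge A a : In a A -> a <= lmax A.
Proof.
  unfold lmax. generalize (hd 0 A). intros d. induction A as [|b A IH]; simpl; [tauto|].
  intros [->|H]; [apply Rmax_l | eapply Rle_trans; [apply IH; auto | apply Rmax_r]].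
Qed.

Lemma lmin_in A : A <> nil -> In (lmin A) A.
Proof.
  intros HA. destruct A as [|a A]; [congruence|]. unfold lmin; simpl hd.
  destruct (fold_right_select Rmin a (a :: A)) as [->|]; simpl; auto.
  intros x y. destruct (Rle_dec x y); [rewrite Rmin_left | rewrite Rmin_right]; auto; lra.
Qed.

Lemma lmax_in A : A <> nil -> In (lmax A) A.
Proof.
  intros HA. destruct A as [|a A]; [congruence|]. unfold lmax; simpl hd.
  destruct (fold_right_select Rmax a (a :: A)) as [->|]; simpl; auto.
  intros x y. destruct (Rle_dec x y); [rewrite Rmax_right | rewrite Rmax_left]; auto; lra.
Qed.

Section Hull.
Variables (n : nat) (p : R) (A : list R).
Hypothesis Hn : (1 <= n)%nat.
Hypothesis Hp : 1 < p.
Hypothesis HA : A <> nil.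

Definition hull_scale : R := (lmax A - lmin A) / (p ^ n - 1).

Definition hull_shift : C :=
  Cmult (RtoC (/ (p ^ n - 1))) (Csum n (fun k => Cmult (RtoC (lmin A)) (Cpow (qbase n p) k))).

Lemma lmin_le_lmax : lmin A <= lmax A.
Proof. apply (Rle_trans _ (lmin A)); [lra | apply lmax_ge, lmin_in; auto]. Qed.

Lemma lin_affine (t : nat -> R) :
  lin n (qpow n p) (fun k => lmin A / (p ^ n - 1) + hull_scale * t k)
  = Cplus (Cmult (RtoC hull_scale) (lin n (qpow n p) t)) hull_shift.
Proof.
  rewrite lin_plus, lin_scal, Cplus_comm. f_equal. unfold hull_shift.
  rewrite <- (lin_scal n (qpow n p) _ (fun _ => lmin A)). apply lin_ext. intros; unfold Rdiv; ring.
Qed.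

Lemma Lambda_in_affimg y :
  Lambda n p A y -> affimg hull_scale (conv (Vall n (qbase n p))) hull_shift y.
Proof.
  intros [x [Hx Hs]].
  assert (Hb : forall j, lmin A <= x j <= lmax A)
    by (intros j; split; [apply lmin_le | apply lmax_ge]; auto).
  assert (Hy : y = lin n (qpow n p) (coef n p x))
    by exact (is_series_C_unique _ _ _ Hs (is_series_expansion n p Hn Hp x _ _ Hb)).
  pose proof (Rlt_pow_R1 p n Hp ltac:(lia)). pose proof lmin_le_lmax.
  assert (Hinv : 0 < / (p ^ n - 1)) by (apply Rinv_0_lt_compat; lra).
  set (t := fun k => if Req_EM_T (lmax A) (lmin A) then 0
                     else (coef n p x k - lmin A / (p ^ n - 1)) / hull_scale).
  assert (Ht : forall k, (k < n)%nat ->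
    0 <= t k <= 1 /\ coef n p x k = lmin A / (p ^ n - 1) + hull_scale * t k).
  { intros k Hk. pose proof (coef_bounds n p Hn Hp x _ _ k Hk Hb) as Hc.
    unfold t, hull_scale, Rdiv in *. destruct (Req_EM_T (lmax A) (lmin A)) as [E|E].
    - rewrite E in Hc |- *. split; lra.
    - assert (0 < (lmax A - lmin A) * / (p ^ n - 1)) by (apply Rmult_lt_0_compat; lra).
      split; [split|].
      + apply Rmult_le_pos; [lra | left; apply Rinv_0_lt_compat; lra].
      + apply Rle_div_l; lra.
      + field. split; lra. }
  exists (lin n (qpow n p) t). split.
  - apply zonotope_in_conv_Vall; auto. intros k Hk; apply Ht; auto.
  - rewrite Hy, <- lin_affine. apply lin_ext. intros k Hk. apply Ht; auto.
Qed.

(* The digit [x_s] is [max A] or [min A] according to [chi (negmod n s)]. *)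
Lemma Lambda_of_indicator (chi : nat -> bool) :
  Lambda n p A (Cplus (Cmult (RtoC hull_scale)
                        (Csum n (fun k => if chi k then Cpow (qbase n p) k else RtoC 0)))
                      hull_shift).
Proof.
  pose proof lmin_le_lmax. pose proof (Rlt_pow_R1 p n Hp ltac:(lia)).
  set (f := fun k => if chi k then lmax A else lmin A).
  exists (fun s => f (negmod n s)). split.
  - intros j. unfold f. destruct (chi _); [apply lmax_in | apply lmin_in]; auto.
  - replace (Cplus _ _) with (lin n (qpow n p) (coef n p (fun s => f (negmod n s)))).
    + apply (is_series_expansion n p Hn Hp (fun s => f (negmod n s)) (lmin A) (lmax A)).
      intros j; unfold f; destruct (chi _); lra.
    + replace (Csum n _) with (lin n (qpow n p) (fun k => if chi k then 1 else 0))
        by (apply Csum_ext; intros; unfold qpow; destruct (chi _); C_ring).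
      rewrite <- lin_affine. apply lin_ext. intros k Hk.
      rewrite coef_residue_digits by auto. unfold f, hull_scale.
      destruct (chi k); field; lra.
Qed.

Lemma conv_Lambda z :
  conv (Lambda n p A) z <-> affimg hull_scale (conv (Vall n (qbase n p))) hull_shift z.
Proof.
  apply conv_affimg.
  - apply Lambda_in_affimg.
  - intros v [h [_ [-> | ->]]]; apply Lambda_of_indicator.
Qed.

End Hull.

Lemma Vall_even n q z : Nat.even n = true -> Vall n q z <-> Veven n q z.
Proof.
  intros He.
  assert (Hv : forall h, vodd n q h = veven n q h).
  { apply Nat.even_spec in He as [m Hm]. intros h. apply Csum_ext. intros k Hk.
    unfold inKlow, inKup. replace ((Z.of_nat n + 1) / 2)%Z with (Z.of_nat n / 2)%Z; [reflexivity|].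
    rewrite Hm, Nat2Z.inj_mul. Z.div_mod_to_equations. lia. }
  split.
  - intros [h [Hh [E|E]]]; exists h; split; auto; rewrite E; auto.
  - intros [h [Hh E]]; exists h; split; auto.
Qed.

Theorem theorem3p15 (n : nat) (p : R) (A : list R) :
  (1 <= n)%nat -> 1 < p -> A <> nil ->
  let q := qbase n p in
  let c := (lmax A - lmin A) / (p ^ n - 1) in
  let d := Cmult (RtoC (/ (p ^ n - 1)))
                 (Csum n (fun k => Cmult (RtoC (lmin A)) (Cpow q k))) in
  (forall z, conv (Lambda n p A) z <-> affimg c (conv (Vall n q)) d z) /\
  (Nat.even n = true ->
   forall z, conv (Lambda n p A) z <-> affimg c (conv (Veven n q)) d z).
Proof.
  intros Hn Hp HA q c d.
  split; [exact (conv_Lambda n p A Hn Hp HA)|].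
  intros He z. rewrite (conv_Lambda n p A Hn Hp HA).
  split; intros [y [Hy Hz]]; exists y; split; auto;
    revert Hy; apply conv_mono; intros v; apply Vall_even; auto.
Qed.
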